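(* Let $d\ge1$, $D=\{1,\dots,d\}$, let $\Pi,Q$ be $d\times d$ stochastic matrices indexed by $D$, and let $\mathcal{E}^{(O)}_H:\mathcal{M}_d\otimes\mathcal{M}_d\to\mathcal{M}_d$ be the linear extension of $\mathcal{E}^{(O)}_H(a\otimes b)=\mathcal{E}_H(\mathcal{E}_{H,O}(a\otimes\mathbf{1}_d)\otimes b)$. Then $\mathcal{E}^{(O)}_H$ maps $\mathcal{D}_e\otimes\mathcal{D}_e$ into $\mathcal{D}_e$, where $\mathcal{D}_e=\{\sum_{h\in D}x_he_{hh}:x_h\in\mathbb{C}\}$ is the diagonal subalgebra of $\mathcal{M}_d$.
   Context: $\mathcal{M}_d$: complex $d\times d$ matrices with identity $\mathbf{1}_d$ and matrix units $e_{ij}$; $\diamond$ is the Schur (entrywise) product; stochastic matrices have nonnegative entries and row sums $1$. $P_H(A)=\sum_{i,j,k,l\in D}\sqrt{\Pi_{ik}\Pi_{jl}}\,a_{kl}e_{ij}$, $P_{H,O}(B)=\sum_{i,j,k,l\in D}\sqrt{Q_{ik}Q_{jl}}\,b_{kl}e_{ij}$, $\mathcal{E}_H(a\otimes b)=a\diamond P_H(b)$, $\mathcal{E}_{H,O}(a\otimes b)=a\diamond P_{H,O}(b)$ (extended linearly). *)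

(* The field of scalars C is an arbitrary numClosedFieldType
   (e.g. complex numbers over a real closed field); stochastic entries are
   nonnegative elements of C (hence real), square roots via sqrtC. *)
From HB Require Import structures.
From mathcomp Require Import all_boot all_order all_algebra.
Set Implicit Arguments. Unset Strict Implicit. Unset Printing Implicit Defensive.
Import Order.TTheory GRing.Theory Num.Theory.
Local Open Scope ring_scope.

Definition stochastic (C : numClosedFieldType) (d : nat) (P : 'M[C]_d) : Prop :=
  (forall i j, 0 <= P i j) /\ (forall i, \sum_j P i j = 1).

Definition schur (C : numClosedFieldType) (d : nat) (a b : 'M[C]_d) : 'M[C]_d :=
  \matrix_(i, j) (a i j * b i j).

Definition PH (C : numClosedFieldType) (d : nat) (Pi A : 'M[C]_d) : 'M[C]_d :=
  \matrix_(i, j) \sum_k \sum_l (sqrtC (Pi i k * Pi j l) * A k l).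

Definition PHO (C : numClosedFieldType) (d : nat) (Q B : 'M[C]_d) : 'M[C]_d :=
  \matrix_(i, j) \sum_k \sum_l (sqrtC (Q i k * Q j l) * B k l).

Definition EH (C : numClosedFieldType) (d : nat) (Pi a b : 'M[C]_d) : 'M[C]_d :=
  schur a (PH Pi b).

Definition EHO (C : numClosedFieldType) (d : nat) (Q a b : 'M[C]_d) : 'M[C]_d :=
  schur a (PHO Q b).

Definition EHOt (C : numClosedFieldType) (d : nat) (Pi Q a b : 'M[C]_d) : 'M[C]_d :=
  EH Pi (EHO Q a 1%:M) b.

(* Linear extension to M_d (x) M_d: an element sum_p p.1 (x) p.2 is
   represented by a finite list of pairs. *)
Definition EHO_lin (C : numClosedFieldType) (d : nat) (Pi Q : 'M[C]_d)
  (t : seq ('M[C]_d * 'M[C]_d)) : 'M[C]_d :=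
  \sum_(p <- t) EHOt Pi Q p.1 p.2.

Definition in_De (C : numClosedFieldType) (d : nat) (A : 'M[C]_d) : bool :=
  is_diag_mx A.

(* Each simple tensor is sent to a Schur product whose left factor is a
   itself, and a Schur product with a diagonal matrix is diagonal; summing
   preserves diagonality. *)
From HB Require Import structures.
From mathcomp Require Import all_boot all_order all_algebra.
Import Order.TTheory GRing.Theory Num.Theory.
Local Open Scope ring_scope.

Section DiagonalMatrices.

Variables (V : nmodType) (m n : nat).

Lemma is_diag_mxD (A B : 'M[V]_(m, n)) :
  is_diag_mx A -> is_diag_mx B -> is_diag_mx (A + B).
Proof.
move=> /is_diag_mxP A0 /is_diag_mxP B0; apply/is_diag_mxP => i j nij.
by rewrite mxE A0 // B0 // addr0.
Qed.

Lemma is_diag_mx_sum (I : eqType) (r : seq I) (P : pred I) (F : I -> 'M[V]_(m, n)) :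
  (forall x, x \in r -> P x -> is_diag_mx (F x)) ->
  is_diag_mx (\sum_(x <- r | P x) F x).
Proof.
move=> Fdiag; rewrite big_seq_cond.
apply: (big_ind is_diag_mx) => [|A B|x /andP[]]; first exact: mx0_is_diag.
  exact: is_diag_mxD.
exact: Fdiag.
Qed.

End DiagonalMatrices.

Lemma is_diag_mx_schurl (C : numClosedFieldType) (d : nat) (a b : 'M[C]_d) :
  is_diag_mx a -> is_diag_mx (schur a b).
Proof.
by move=> /is_diag_mxP a0; apply/is_diag_mxP => i j nij; rewrite mxE a0 ?mul0r.
Qed.

Lemma is_diag_mx_EHOt (C : numClosedFieldType) (d : nat) (Pi Q a b : 'M[C]_d) :
  is_diag_mx a -> is_diag_mx (EHOt Pi Q a b).
Proof. by move=> adiag; do 2!apply: is_diag_mx_schurl. Qed.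

Theorem mainTheorem8 (C : numClosedFieldType) (d : nat) (hd : (0 < d)%N)
  (Pi Q : 'M[C]_d) (hPi : stochastic Pi) (hQ : stochastic Q)
  (t : seq ('M[C]_d * 'M[C]_d))
  (ht : forall p, p \in t -> in_De p.1 /\ in_De p.2) :
  in_De (EHO_lin Pi Q t).
Proof.
apply: is_diag_mx_sum => p /ht[p1diag _] _.
exact: is_diag_mx_EHOt.
Qed.
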